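(* Let $p$ be a prime, $0<\alpha\le 1$, and let $S\subseteq\mathbb{Z}_p$ be such that for any distinct $x_1,x_2,y_1,y_2,z_1,z_2\in S$, $$\det\begin{pmatrix}x_1-y_1 & x_2-y_2\\ y_1-z_1 & y_2-z_2\end{pmatrix}\neq 0 \quad\text{in } \mathbb{Z}_p.$$ Then $$\mathcal{C}^{\mathrm{bsgs}}_\alpha(S)>(\alpha|S|/\sqrt3)^{2/3}.$$
   Context: For $L\subseteq\mathbb{Z}_p^2$ and $C\subseteq\mathbb{Z}_p$, $I(L,C)=\{x\in\mathbb{Z}_p\mid \exists (a,b)\in L,\ c\in C \text{ with } a\neq0 \text{ and } ax+b=c\}$. The baby-step giant-step $\alpha$-complexity $\mathcal{C}^{\mathrm{bsgs}}_\alpha(S)$ of $S\subseteq\mathbb{Z}_p$ is the smallest integer $m$ such that there exist $L\subseteq\mathbb{Z}_p^2$ and $C\subseteq\mathbb{Z}_p$ with $|L|=|C|=m$ and $|I(L,C)\cap S|\geq\alpha|S|$. *)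

From HB Require Import structures.
From mathcomp Require Import all_boot all_order all_algebra.
From mathcomp Require Import all_classical all_reals all_analysis.
Set Implicit Arguments. Unset Strict Implicit. Unset Printing Implicit Defensive.
Import Order.TTheory GRing.Theory Num.Theory.
Local Open Scope ring_scope.

(* Z_p for a prime p is 'F_p. *)

Definition Iset (p : nat) (L : {set 'F_p * 'F_p}) (C : {set 'F_p}) : {set 'F_p} :=
  [set x | [exists ab in L, exists c in C, (ab.1 != 0) && (ab.1 * x + ab.2 == c)]].

Definition bsgs_ok (R : realType) (p : nat) (alpha : R) (S : {set 'F_p}) (m : nat) : bool :=
  [exists L : {set 'F_p * 'F_p}, exists C : {set 'F_p},
    [&& #|L| == m, #|C| == m & alpha * #|S|%:R <= #|Iset L C :&: S|%:R]].

(* Since |L| <= p^2, any admissible m is <= p^2, so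
   searching 0..p^2 finds the minimum whenever one exists (for 0 < α <= 1 one
   always exists, e.g. m = p). If none exists the value is p^2+1 (irrelevant). *)
Definition bsgs_complexity (R : realType) (p : nat) (alpha : R) (S : {set 'F_p}) : nat :=
  find (bsgs_ok alpha S) (iota 0 (p ^ 2).+1).

From HB Require Import structures.
From mathcomp Require Import all_boot all_order all_algebra.
From mathcomp Require Import all_classical all_reals all_analysis.
From mathcomp Require Import ring zify.
Set Implicit Arguments.
Unset Strict Implicit.
Unset Printing Implicit Defensive.
Import Order.TTheory GRing.Theory Num.Theory.
Local Open Scope ring_scope.

(* For every x in I(L, C) :&: S fix one witness (l, c) in L x C with
   l.1 * x + l.2 = c; distinct x have distinct witnesses.  Two distinct l, l'
   cannot share three values c: the six solutions would be distinct points of S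
   whose three pairs lie on the line l.1 X + l.2 = l'.1 Y + l'.2, so the
   determinant would vanish.  Counting pairs of witnesses with a common c and
   Cauchy-Schwarz give |E|^2 <= m (|E| + 2 m (m - 1)) < 3 m^3 for the set E of
   witnesses, i.e. m > (|E| / sqrt 3)^(2/3) >= (alpha |S| / sqrt 3)^(2/3). *)

Lemma card_sub_sum (T : finType) (D P : {pred T}) :
  {subset P <= D} -> #|P| = (\sum_(x in D) (x \in P))%N.
Proof.
move=> sPD; rewrite -sum1_card big_mkcond [RHS]big_mkcond /=.
by apply: eq_bigr => x _; case: (boolP (x \in P)) => [/sPD -> | _]; case: (x \in D).
Qed.

Lemma sqr_sum_le_card_mul_sum_sqr (T : finType) (D : {pred T}) (f : T -> nat) :
  ((\sum_(x in D) f x) ^ 2 <= #|D| * \sum_(x in D) f x ^ 2)%N.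
Proof.
rewrite -(leq_pmul2l (isT : (0 < 2)%N)) expnS expn1 big_distrl /= big_distrr /=.
apply: (@leq_trans (\sum_(x in D) \sum_(y in D) (f x ^ 2 + f y ^ 2))%N).
  apply: leq_sum => x _; rewrite big_distrr big_distrr /=.
  by apply: leq_sum => y _; case: (nat_Cauchy (f x) (f y)).
rewrite (eq_bigr (fun x => #|D| * f x ^ 2 + \sum_(y in D) f y ^ 2)%N); last first.
  by move=> x _; rewrite big_split /= sum_nat_const.
by rewrite big_split /= sum_nat_const -big_distrr /=; lia.
Qed.

Section Incidences.
Variables (A B : finType) (L : {set A}) (C : {set B}) (E : {set A * B}).
Hypothesis E_sub : E \subset finset.setX L C.

Let a l c : nat := (l, c) \in E.

Lemma card_incidences_sum :
  #|E| = (\sum_(l in L) \sum_(c in C) a l c)%N.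
Proof.
rewrite (card_sub_sum (fintype.subsetP E_sub)) pair_big_dep /=.
by apply: eq_big => [[l c]|[l c]]; rewrite ?inE.
Qed.

Hypothesis codegree_le2 : forall l l', l != l' ->
  (#|[set c | (l, c) \in E & (l', c) \in E]| <= 2)%N.

Lemma codegree_sum l l' :
  #|[set c | (l, c) \in E & (l', c) \in E]| = (\sum_(c in C) a l c * a l' c)%N.
Proof.
rewrite (@card_sub_sum _ C); last first.
  by move=> c; rewrite inE => /andP[/(fintype.subsetP E_sub)]; rewrite inE => /andP[].
by apply: eq_bigr => c _; rewrite inE mulnb.
Qed.

Lemma sum_sqr_degree :
  (\sum_(c in C) (\sum_(l in L) a l c) ^ 2 =
   \sum_(l in L) \sum_(l' in L) \sum_(c in C) a l c * a l' c)%N.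
Proof.
transitivity (\sum_(c in C) \sum_(l in L) \sum_(l' in L) a l c * a l' c)%N.
  apply: eq_bigr => c _; rewrite expnS expn1 big_distrl /=.
  by apply: eq_bigr => l _; rewrite big_distrr.
by rewrite exchange_big /=; apply: eq_bigr => l _; apply: exchange_big.
Qed.

Lemma sum_codegree_le l : l \in L ->
  (\sum_(l' in L) \sum_(c in C) a l c * a l' c <=
   \sum_(c in C) a l c + 2 * #|L|.-1)%N.
Proof.
move=> lL; rewrite (bigD1 l) //= leq_add //.
  by apply/eq_leq/eq_bigr => c _; rewrite mulnb andbb.
have sum2 : (2 + \sum_(l' in L | l' != l) 2 = #|L| * 2)%N.
  by rewrite -sum_nat_const [RHS](bigD1 l).
apply: (@leq_trans (\sum_(l' in L | l' != l) 2)%N); last by lia.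
by apply: leq_sum => l' /andP[_ nl]; rewrite -codegree_sum codegree_le2 // eq_sym.
Qed.

Lemma card_incidences_sqr_le :
  (#|E| ^ 2 <= #|C| * (#|E| + 2 * (#|L| * #|L|.-1)))%N.
Proof.
rewrite [X in (X ^ 2 <= _)%N]card_incidences_sum exchange_big /=.
apply: leq_trans (sqr_sum_le_card_mul_sum_sqr _ _) _.
rewrite leq_mul2l sum_sqr_degree card_incidences_sum mulnCA -sum_nat_const.
by rewrite -big_split /= leq_sum ?orbT // => l; apply: sum_codegree_le.
Qed.

Lemma card_incidences_sqr_lt m : #|L| = m -> #|C| = m -> (0 < #|E|)%N ->
  (#|E| ^ 2 < 3 * m ^ 3)%N.
Proof.
move=> cardL cardC E_gt0.
have := card_incidences_sqr_le.
have : (#|E| <= #|L| * #|C|)%N by rewrite -cardsX subset_leq_card.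
rewrite cardL cardC.
nia.
Qed.
End Incidences.

Lemma det_mx22 (R : comNzRingType) (M : 'M[R]_2) :
  \det M = M 0 0 * M 1 1 - M 0 1 * M 1 0.
Proof.
rewrite (expand_det_row _ 0) !big_ord_recl big_ord0 /cofactor !det_mx11 !mxE /=.
have -> : lift (0 : 'I_2) (0 : 'I_1) = 1 by apply/val_inj.
have -> : lift (1 : 'I_2) (0 : 'I_1) = 0 by apply/val_inj.
have -> : (ord0 : 'I_2) = 0 by apply/val_inj.
by rewrite /bump /= expr0 expr1; ring.
Qed.

Definition diff_det (F : comNzRingType) (x1 x2 y1 y2 z1 z2 : F) : F :=
  \det (\matrix_(i < 2, j < 2)
          nth 0 (nth [::] [:: [:: x1 - y1; x2 - y2]; [:: y1 - z1; y2 - z2]] i) j).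

Lemma diff_detE (F : comNzRingType) (x1 x2 y1 y2 z1 z2 : F) :
  diff_det x1 x2 y1 y2 z1 z2 = (x1 - y1) * (y2 - z2) - (x2 - y2) * (y1 - z1).
Proof. by rewrite /diff_det det_mx22 !mxE. Qed.

(* The three points ((c_i - b) / a, (c_i - b') / a') lie on the line a X + b = a' Y + b'. *)
Lemma diff_det_solutions_eq0 (F : fieldType) (a b a' b' c1 c2 c3 : F) :
  a != 0 -> a' != 0 ->
  diff_det ((c1 - b) / a) ((c1 - b') / a') ((c2 - b) / a) ((c2 - b') / a')
           ((c3 - b) / a) ((c3 - b') / a') = 0.
Proof. by move=> a_neq0 a'_neq0; rewrite diff_detE; field; rewrite a_neq0 a'_neq0. Qed.

Definition noncollinear_triples (F : finFieldType) (S : {set F}) :=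
  forall x1 x2 y1 y2 z1 z2 : F,
    x1 \in S -> x2 \in S -> y1 \in S -> y2 \in S -> z1 \in S -> z2 \in S ->
    uniq [:: x1; x2; y1; y2; z1; z2] -> diff_det x1 x2 y1 y2 z1 z2 != 0.

Section Witnesses.
Variables (p : nat) (L : {set 'F_p * 'F_p}) (C : {set 'F_p}).
Implicit Types (x : 'F_p) (u : 'F_p * 'F_p * 'F_p).

Definition solves x u :=
  [&& u.1 \in L, u.2 \in C, u.1.1 != 0 & u.1.1 * x + u.1.2 == u.2].

Definition solution u : 'F_p := (u.2 - u.1.2) / u.1.1.

Definition witness x : 'F_p * 'F_p * 'F_p := odflt (0, 0, 0) [pick u | solves x u].

Lemma solves_solution x u : solves x u -> solution u = x.
Proof. by case/and4P=> _ _ a_neq0; rewrite /solution => /eqP <-; field. Qed.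

Lemma witnessP x : x \in Iset L C -> solves x (witness x).
Proof.
rewrite inE => /existsP[ab /andP[abL /existsP[c /andP[cC sol]]]].
rewrite /witness; case: pickP => [u -> // | none].
by have := none (ab, c); rewrite /solves /= abL cC sol.
Qed.

Variable S : {set 'F_p}.

Definition witnesses := witness @: (Iset L C :&: S).

Lemma witnessesP u : u \in witnesses -> solves (solution u) u /\ solution u \in S.
Proof.
case/imsetP=> x /setIP[xI xS] ->.
by have sol := witnessP xI; rewrite (solves_solution sol).
Qed.

Lemma witness_solution u : u \in witnesses -> witness (solution u) = u.
Proof.
by case/imsetP=> x /setIP[xI _] ->; rewrite (solves_solution (witnessP xI)).
Qed.

Lemma card_witnesses : #|witnesses| = #|Iset L C :&: S|.
Proof.
apply: card_in_imset => x y /setIP[xI _] /setIP[yI _] eq_w.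
by rewrite -(solves_solution (witnessP xI)) eq_w (solves_solution (witnessP yI)).
Qed.

Lemma witnesses_sub : witnesses \subset finset.setX L C.
Proof.
by apply/fintype.subsetP => u /witnessesP[/and4P[uL uC _ _] _]; rewrite inE uL uC.
Qed.

Hypothesis S_gen : noncollinear_triples S.

Lemma witnesses_codegree_le2 l l' : l != l' ->
  (#|[set c | (l, c) \in witnesses & (l', c) \in witnesses]| <= 2)%N.
Proof.
move=> l_neq; rewrite leqNgt; apply/card_gt2P.
move=> [c1 [c2 [c3 [[]]]]]; rewrite !inE.
move=> /andP[w11 w21] /andP[w12 w22] /andP[w13 w23] [c12 c23 c31].
set us := [:: (l, c1); (l', c1); (l, c2); (l', c2); (l, c3); (l', c3)].
have us_w : all (mem witnesses) us by rewrite /= w11 w21 w12 w22 w13 w23.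
have us_uniq : uniq (map solution us).
  rewrite (map_inj_in_uniq (sub_in2 (allP us_w) (can_in_inj witness_solution))).
  rewrite /= !inE !xpair_eqE ?[l' == l]eq_sym ?[c2 == c1]eq_sym ?[c3 == c2]eq_sym.
  by rewrite ?[c1 == c3]eq_sym (negbTE l_neq) (negbTE c12) (negbTE c23) (negbTE c31) !andbF.
have inS u : u \in witnesses -> solution u \in S by case/witnessesP.
have [/and4P[_ _ l_neq0 _] _] := witnessesP w11.
have [/and4P[_ _ l'_neq0 _] _] := witnessesP w21.
have := S_gen (inS _ w11) (inS _ w21) (inS _ w12) (inS _ w22)
  (inS _ w13) (inS _ w23) us_uniq.
by rewrite diff_det_solutions_eq0 ?eqxx.
Qed.

Lemma card_Iset_sqr_lt m : #|L| = m -> #|C| = m ->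
  (0 < #|Iset L C :&: S|)%N -> (#|Iset L C :&: S| ^ 2 < 3 * m ^ 3)%N.
Proof.
rewrite -card_witnesses.
exact: (card_incidences_sqr_lt witnesses_sub witnesses_codegree_le2).
Qed.

End Witnesses.

Lemma bsgs_complexityP (R : realType) (p : nat) (alpha : R) (S : {set 'F_p}) :
  bsgs_ok alpha S (bsgs_complexity alpha S) \/ bsgs_complexity alpha S = (p ^ 2).+1.
Proof.
rewrite /bsgs_complexity; set s := iota 0 (p ^ 2).+1.
have [has_ok | no_ok] := boolP (has (bsgs_ok alpha S) s).
  left; have := nth_find 0%N has_ok; rewrite nth_iota ?add0n //.
  by rewrite -(size_iota 0 (p ^ 2).+1) -has_find.
by right; rewrite hasNfind // size_iota.
Qed.

Lemma powR_two_thirds_lt (R : realType) (t u : R) : 0 <= t -> 0 <= u ->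
  t ^+ 2 < 3 * u ^+ 3 -> (t / Num.sqrt 3) `^ (2 / 3) < u.
Proof.
move=> t_ge0 u_ge0 lt_tu; set y := t / Num.sqrt 3.
have y_ge0 : 0 <= y by rewrite divr_ge0 ?sqrtr_ge0.
rewrite -(@ltr_pXn2r _ 3) ?nnegrE ?powR_ge0 // -powR_mulrn ?powR_ge0 // -powRrM.
have -> : 2 / 3 * 3%:R = 2%:R :> R by field.
by rewrite powR_mulrn // expr_div_n sqr_sqrtr // ltr_pdivrMr ?sqrtr_gt0 // mulrC.
Qed.

Theorem theorem8 (R : realType) (p : nat) (alpha : R) (S : {set 'F_p}) :
  prime p -> 0 < alpha -> alpha <= 1 -> (0 < #|S|)%N ->
  (forall x1 x2 y1 y2 z1 z2 : 'F_p,
      x1 \in S -> x2 \in S -> y1 \in S -> y2 \in S -> z1 \in S -> z2 \in S ->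
      uniq [:: x1; x2; y1; y2; z1; z2] ->
      \det (\matrix_(i < 2, j < 2)
              nth 0 (nth [::] [:: [:: x1 - y1; x2 - y2]; [:: y1 - z1; y2 - z2]] i) j) != 0) ->
  (alpha * #|S|%:R / Num.sqrt 3) `^ (2 / 3) < (bsgs_complexity alpha S)%:R.
Proof.
move=> p_prime alpha_gt0 alpha_le1 S_gt0 S_gen.
have aS_gt0 : 0 < alpha * #|S|%:R by rewrite mulr_gt0 ?ltr0n.
apply: powR_two_thirds_lt; [exact: ltW | exact: ler0n |].
have [/existsP[L /existsP[C /and3P[/eqP cardL /eqP cardC aS_le]]] | ->] :=
  bsgs_complexityP alpha S.
  have T_gt0 : (0 < #|Iset L C :&: S|)%N by rewrite -(ltr0n R) (lt_le_trans aS_gt0).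
  have := card_Iset_sqr_lt S_gen cardL cardC T_gt0.
  rewrite -(ltr_nat R) natrM !natrX; apply: le_lt_trans.
  by rewrite ler_pXn2r ?nnegrE ?ler0n ?(ltW aS_gt0).
(* No admissible m <= p^2: the complexity is p^2 + 1 and alpha |S| <= p. *)
have S_le_p : (#|S| <= p)%N by rewrite -[p in (_ <= p)%N](card_Fp p_prime) max_card.
have aS_le_p : alpha * #|S|%:R <= p%:R.
  by rewrite (le_trans (ler_piMl _ alpha_le1)) ?ler_nat.
have : (p ^ 2 < 3 * (p ^ 2).+1 ^ 3)%N by nia.
rewrite -(ltr_nat R) natrM !natrX; apply: le_lt_trans.
by rewrite ler_pXn2r ?nnegrE ?ler0n ?(ltW aS_gt0).
Qed.
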